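(* Let $\pi\in[n]^m$ be a picking sequence for chores and let $i\ne j$ be two pickers. If in every suffix of $\pi$ picker $j$ has at least as many rounds as picker $i$, then a risk averse picker $i$ with any additive disvaluation $c_i$ does not envy picker $j$, not even ex-post: for any disvaluations and strategies of the other agents, when $i$ picks greedily, $c_i(B_i)\le c_i(B_j)$. Conversely, if this suffix condition fails, then there is an additive disvaluation $c_i$ for picker $i$ under which $i$ envies $j$, i.e. $\sum_{r\in R_i}c_i(e_{m-r+1})>\sum_{r\in R_j}c_i(e_{m-r+1})$, where $R_i,R_j$ are the rounds of $i$ and $j$ in $\pi$ and the chores are ordered so that $c_i(e_1)\ge\cdots\ge c_i(e_m)$.
   Context: In round $r$ of the picking sequence, picker $\pi_r$ takes one remaining chore. A risk averse agent uses the greedy picking strategy (take a remaining chore of smallest own disvalue); the disvalue such an agent can guarantee from a set $R$ of rounds is $\sum_{r\in R}c_i(e_{m-r+1})$ with chores sorted by non-increasing $c_i$. $B_i,B_j$ denote the final bundles of $i$ and $j$. *)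

From HB Require Import structures.
From mathcomp Require Import all_boot all_order all_algebra.
Set Implicit Arguments. Unset Strict Implicit. Unset Printing Implicit Defensive.
Import Order.TTheory GRing.Theory Num.Theory.
Local Open Scope ring_scope.

(* Conventions: m chores, represented by 'I_m; n agents 'I_n.
   Rounds are 0-indexed: round r : 'I_m (paper's round r+1).
   A picking sequence is pi : 'I_m -> 'I_n (pi r = picker of round r). *)

Section Picking.
Variables (m n : nat) (pi : 'I_m -> 'I_n).

Definition rounds_from (r : nat) (k : 'I_n) : nat :=
  #|[pred t : 'I_m | (r <= t)%N && (pi t == k)]|.

Definition suffix_cond (i j : 'I_n) : Prop :=
  forall r : nat, (rounds_from r i <= rounds_from r j)%N.

(* A (history-dependent) strategy maps the history of picks made so far
   to the chore picked now. *)
Definition strategy := seq 'I_m -> 'I_m.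

Definition valid_strategy (s : strategy) : Prop :=
  forall h : seq 'I_m, (size h < m)%N -> s h \notin h.

Definition greedy_strategy (R : numDomainType) (c : 'I_m -> R) (s : strategy) : Prop :=
  forall h : seq 'I_m, (size h < m)%N ->
    s h \notin h /\ forall x : 'I_m, x \notin h -> c (s h) <= c x.

Definition history (sigma : 'I_n -> strategy) (r : nat) : seq 'I_m :=
  foldl (fun h t => rcons h (sigma (pi t) h)) [::] (take r (enum 'I_m)).

Definition pick (sigma : 'I_n -> strategy) (t : 'I_m) : 'I_m :=
  sigma (pi t) (history sigma t).

Definition bundle_cost (R : numDomainType) (c : 'I_m -> R)
    (sigma : 'I_n -> strategy) (k : 'I_n) : R :=
  \sum_(t < m | pi t == k) c (pick sigma t).

(* values of c sorted non-increasingly: c(e_1) >= ... >= c(e_m);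
   sorted_val c p = c(e_{p+1}) (0-indexed position p) *)
Definition sorted_val (R : realDomainType) (c : 'I_m -> R) (p : nat) : R :=
  nth 0 (sort (fun x y : R => y <= x) [seq c x | x <- enum 'I_m]) p.

(* guaranteed disvalue of the rounds R_k of agent k:
   sum over rounds r (1-indexed) of c(e_{m-r+1}); with 0-indexed round t
   (= r-1) this is position m-1-t in the non-increasing order. *)
Definition guarantee (R : realDomainType) (c : 'I_m -> R) (k : 'I_n) : R :=
  \sum_(t < m | pi t == k) sorted_val c (m.-1 - t).

End Picking.

From Pilot Require Import Defs.
From HB Require Import structures.
From mathcomp Require Import all_boot all_order all_algebra.
From mathcomp Require Import zify lra.
From Stdlib Require Import Classical.
Import Order.TTheory GRing.Theory Num.Theory.
Local Open Scope ring_scope.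
Set Implicit Arguments. Unset Strict Implicit. Unset Printing Implicit Defensive.

(* Let v t be i's disvalue for the chore taken in round t. A chore that j, or
   anyone, takes in a round s >= t was still available to i in round t, so
   greedy picking makes v nondecreasing from each of i's rounds on. Sweeping the
   rounds backwards, the suffix condition lets every round of i be charged to a
   round of j that is no earlier, hence no cheaper for i; the induction carries
   the surplus of j's rounds in the current suffix, each worth at least a lower
   bound w of v on that suffix.
   Conversely, if the suffix starting at round r has more rounds of i than of j,
   charge 1 for each of the m - r chores of smallest index and 0 otherwise: the
   guarantee of an agent is then the number of its rounds in that suffix. *)

Lemma big_geq_recl (R : nmodType) (m r : nat) (hr : (r < m)%N) (F : 'I_m -> R) :
  \sum_(t < m | (r <= t)%N) F t = F (Ordinal hr) + \sum_(t < m | (r < t)%N) F t.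
Proof.
rewrite (bigD1 (Ordinal hr)) //=; congr (_ + _); apply: eq_bigl => t.
by rewrite ltn_neqAle -val_eqE eq_sym andbC.
Qed.

Section SuffixDomination.
Variables (R : realDomainType) (m : nat).

Definition suffix_sum (r : nat) (A : pred 'I_m) (f : 'I_m -> R) : R :=
  \sum_(t < m | (r <= t)%N && A t) f t.

Lemma suffix_sum_recl r (hr : (r < m)%N) A f :
  suffix_sum r A f = (if A (Ordinal hr) then f (Ordinal hr) else 0) + suffix_sum r.+1 A f.
Proof. by rewrite /suffix_sum !big_mkcondr (big_geq_recl hr). Qed.

Lemma suffix_sum_out r A f : (m <= r)%N -> suffix_sum r A f = 0.
Proof.
move=> hr; apply: big1 => t /andP [hrt _].
by have := leq_trans hr hrt; rewrite leqNgt ltn_ord.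
Qed.

Definition suffix_count (r : nat) (A : pred 'I_m) : nat :=
  #|[pred t : 'I_m | (r <= t)%N && A t]|.

Lemma suffix_sum_const1 r A : suffix_sum r A (fun=> 1) = (suffix_count r A)%:R.
Proof. by rewrite /suffix_sum sumr_const. Qed.

Variables (P Q : pred 'I_m) (v : 'I_m -> R).
Hypothesis v_ge0 : forall t, 0 <= v t.
Hypothesis v_monoP : forall t s : 'I_m, P t -> (t <= s)%N -> v t <= v s.
Hypothesis count_suffix : forall r, (suffix_count r P <= suffix_count r Q)%N.

Lemma suffix_sum_credit r w : (forall t : 'I_m, (r <= t)%N -> w <= v t) ->
  suffix_sum r P v + ((suffix_count r Q)%:R - (suffix_count r P)%:R) * w
  <= suffix_sum r Q v.
Proof.
rewrite -!suffix_sum_const1.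
move def_d : (m - r)%N => d; elim: d r def_d w => [|d IH] r def_d w w_le.
  have hm : (m <= r)%N by lia.
  by rewrite !suffix_sum_out // subrr mul0r addr0.
have hr : (r < m)%N by lia.
have := count_suffix r; rewrite -(ler_nat R) -!suffix_sum_const1.
rewrite !(suffix_sum_recl hr); set t0 := Ordinal hr => count_r.
have w_le_t0 : w <= v t0 by apply: w_le.
have IHw := IH r.+1 (ltac:(lia)) w (fun t ht => w_le t (ltnW ht)).
set A := suffix_sum r.+1 Q (fun=> 1) in count_r IHw *.
set B := suffix_sum r.+1 P (fun=> 1) in count_r IHw *.
case: (boolP (Q t0)) => [Qt0|nQt0] in count_r *; first by case: (P t0); nra.
case: (boolP (P t0)) => [Pt0|nPt0] in count_r *; last by lra.
(* A round of i alone uses up one unit of surplus, but the credit may rise to v t0. *)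
have := IH r.+1 (ltac:(lia)) (v t0) (fun t ht => v_monoP Pt0 (ltnW ht)).
rewrite -/A -/B; nra.
Qed.

Lemma suffix_sum_le : \sum_(t < m | P t) v t <= \sum_(t < m | Q t) v t.
Proof.
have := @suffix_sum_credit 0 0 (fun t _ => v_ge0 t).
by rewrite mulr0 addr0.
Qed.

End SuffixDomination.

Section GreedyPicks.
Variables (m n : nat) (pi : 'I_m -> 'I_n) (sigma : 'I_n -> strategy m).

Lemma historyE k : (k <= m)%N ->
  history pi sigma k = map (Defs.pick pi sigma) (take k (enum 'I_m)).
Proof.
elim: k => [|k IH] hk; first by rewrite /history !take0.
have := take_nth (Ordinal hk) (n := Ordinal hk) (s := enum 'I_m).
rewrite size_enum_ord nth_ord_enum => /(_ hk) take_succ.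
by rewrite /history take_succ foldl_rcons map_rcons -IH 1?ltnW.
Qed.

Lemma size_history k : (k <= m)%N -> size (history pi sigma k) = k.
Proof. by move=> hk; rewrite historyE // size_map size_takel // size_enum_ord. Qed.

Lemma history_take t s : (t <= s)%N -> (s <= m)%N ->
  history pi sigma t = take t (history pi sigma s).
Proof. by move=> ts sm; rewrite !historyE ?(leq_trans ts) // -map_take take_takel. Qed.

Lemma pick_notin_history (t s : 'I_m) : valid_strategy (sigma (pi s)) ->
  (t <= s)%N -> Defs.pick pi sigma s \notin history pi sigma t.
Proof.
move=> valid_s ts; rewrite (history_take ts (ltnW (ltn_ord s))).
apply: contra (valid_s _ _); first exact: mem_take.
by rewrite size_history // ltnW.
Qed.

Lemma greedy_pick_le (R : numDomainType) (c : 'I_m -> R) (i : 'I_n) :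
  (forall k, valid_strategy (sigma k)) -> greedy_strategy c (sigma i) ->
  forall t s : 'I_m, pi t = i -> (t <= s)%N ->
  c (Defs.pick pi sigma t) <= c (Defs.pick pi sigma s).
Proof.
move=> valid greedy t s pit ts.
have [_ greedy_t] := greedy (history pi sigma t) (ltac:(by rewrite size_history // ltnW)).
by rewrite {1}/Defs.pick pit; apply/greedy_t/pick_notin_history.
Qed.

End GreedyPicks.

Section Guarantee.
Variables (R : realDomainType) (m n : nat).

Lemma sorted_valE (c : 'I_m -> R) :
  (forall x y : 'I_m, (x <= y)%N -> c y <= c x) ->
  forall x : 'I_m, sorted_val c x = c x.
Proof.
move=> c_noninc x; rewrite /sorted_val sorted_sort.
- by rewrite (nth_map x) ?size_enum_ord // nth_ord_enum.
- by move=> a b d ba db; apply: le_trans db ba.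
rewrite sorted_map (sub_sorted (e := relpre val leq)) //.
by rewrite -sorted_map val_enum_ord iota_sorted.
Qed.

Definition suffix_cost (r : nat) (x : 'I_m) : R := if (x < m - r)%N then 1 else 0.

Lemma suffix_cost_ge0 r x : 0 <= suffix_cost r x.
Proof. by rewrite /suffix_cost; case: ifP. Qed.

Lemma guarantee_suffix_cost (pi : 'I_m -> 'I_n) r k :
  guarantee pi (suffix_cost r) k = (rounds_from pi r k)%:R.
Proof.
have noninc (x y : 'I_m) : (x <= y)%N -> suffix_cost r y <= suffix_cost r x.
  rewrite /suffix_cost => xy; case: ifP => [/(leq_ltn_trans xy)->|] //.
  by case: ifP.
rewrite /guarantee /rounds_from -sumr_const big_mkcond [RHS]big_mkcond /=.
apply: eq_bigr => t _; rewrite inE andbC.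
have -> : (m.-1 - t)%N = rev_ord t by rewrite /=; lia.
rewrite sorted_valE // /suffix_cost /=.
case: (pi t == k) => //=.
by have -> : (m - t.+1 < m - r)%N = (r <= t)%N by have := ltn_ord t; lia.
Qed.

End Guarantee.

Theorem proposition6 (R : realFieldType) (m n : nat) (pi : 'I_m -> 'I_n)
    (i j : 'I_n) (hij : i != j) :
  (suffix_cond pi i j ->
     forall (c : 'I_m -> R), (forall x, 0 <= c x) ->
     forall sigma : 'I_n -> strategy m,
       (forall k, valid_strategy (sigma k)) ->
       greedy_strategy c (sigma i) ->
       bundle_cost pi c sigma i <= bundle_cost pi c sigma j)
  /\
  (~ suffix_cond pi i j ->
     exists c : 'I_m -> R, (forall x, 0 <= c x) /\
       guarantee pi c j < guarantee pi c i).
Proof.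
split=> [suffix c c_ge0 sigma valid greedy | not_suffix].
  apply: suffix_sum_le => [t|t s /eqP|r]; first exact: c_ge0.
    exact: greedy_pick_le.
  exact: suffix.
have [r /negP] := not_all_ex_not _ _ not_suffix; rewrite -ltnNge => fewer_j.
exists (suffix_cost R r); split=> [x|]; first exact: suffix_cost_ge0.
by rewrite !guarantee_suffix_cost ltr_nat.
Qed.
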